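(* Let $N\ge K\ge1$, $\mathbf{H}\in\mathbb{R}^{N\times K}$ full column rank, with orthonormal eigenvectors $\mathbf{u}_1,\ldots,\mathbf{u}_N$ of $\mathbf{H}\mathbf{H}^T$, $\mathbf{H}\mathbf{H}^T\mathbf{u}_i=\rho_i^2\mathbf{u}_i$, $\rho_1^2\ge\cdots\ge\rho_N^2\ge0$, $\rho_1^2>\rho_N^2$. Fix positive integers $M_1,M_2,N_b$, $\sigma_x^2,\sigma_0^2>0$ and $P_{FA}\in(0,1)$, and let $\gamma=\mathbb{Q}_{F(N_b,N_b)}^{-1}(P_{FA})$. For unit vectors $\mathbf{t}_1,\mathbf{t}_2\in\mathbb{R}^N$ with $\mathbf{t}_1^T\mathbf{t}_2=0$ (corresponding to the fully-correlated design $\boldsymbol{\Phi}_s=\frac1{\sqrt M}\mathbf{1}_{M_1,1}\otimes\mathbf{t}_1^T$, $\boldsymbol{\Phi}_o=\frac1{\sqrt M}\mathbf{1}_{M_2,1}\otimes\mathbf{t}_2^T$, $M=M_1+M_2$) define $$P_D(\mathbf{t}_1,\mathbf{t}_2)=\mathbb{Q}_{F(N_b,N_b)}\Big(\frac{\sigma_0^2+M_2\sigma_x^2\mathbf{t}_2^T\mathbf{H}\mathbf{H}^T\mathbf{t}_2}{\sigma_0^2+M_1\sigma_x^2\mathbf{t}_1^T\mathbf{H}\mathbf{H}^T\mathbf{t}_1}\gamma\Big).$$ Then $(\mathbf{t}_1,\mathbf{t}_2)=(\mathbf{u}_1,\mathbf{u}_N)$ maximizes $P_D(\mathbf{t}_1,\mathbf{t}_2)$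 over all such pairs.
   Context: $\mathbb{Q}_{F(d_1,d_2)}(x)=\Pr(X>x)$ for $X$ $F$-distributed with $(d_1,d_2)$ degrees of freedom; it is continuous and strictly decreasing on $(0,\infty)$ and $\mathbb{Q}^{-1}_{F(d_1,d_2)}$ is its inverse. $\mathbf{1}_{P,1}$ is the all-ones column vector of length $P$, $\otimes$ the Kronecker product. In the paper, $P_D(\mathbf{t}_1,\mathbf{t}_2)$ is the expression used as the detection probability, at false-alarm probability $P_{FA}$, of the test $\frac{M_1\sum_n|\bar z_s[n]|^2}{M_2\sum_n|\bar z_o[n]|^2}\gtrless\gamma$ (averaged outputs of the two device groups) with this design. *)

From HB Require Import structures.
From mathcomp Require Import all_boot all_order all_algebra.
From mathcomp Require Import all_classical all_reals all_analysis.
Set Implicit Arguments. Unset Strict Implicit. Unset Printing Implicit Defensive.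
Import Order.TTheory GRing.Theory Num.Theory.
Local Open Scope ring_scope.
Local Open Scope classical_set_scope.

(* Unnormalized density of the F(d1,d2) distribution:
   x^(d1/2 - 1) (1 + d1 x / d2)^(-(d1+d2)/2) for x > 0, and 0 otherwise. *)
Definition F_kernel (R : realType) (d1 d2 : nat) (x : R) : R :=
  if 0 < x then
    x `^ (d1%:R / 2 - 1) * (1 + d1%:R * x / d2%:R) `^ (- ((d1 + d2)%:R / 2))
  else 0.

Definition QF (R : realType) (d1 d2 : nat) (x : R) : R :=
  fine (\int[@lebesgue_measure R]_(y in `]x, +oo[) (F_kernel d1 d2 y)%:E)
  / fine (\int[@lebesgue_measure R]_(y in `]0, +oo[) (F_kernel d1 d2 y)%:E).

Definition qform (R : realType) (N : nat) (A : 'M[R]_N) (t : 'cV[R]_N) : R :=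
  ((t^T *m A *m t) 0 0).

Definition PD (R : realType) (N K : nat) (H : 'M[R]_(N, K)) (M1 M2 Nb : nat)
  (sx2 s02 gamma : R) (t1 t2 : 'cV[R]_N) : R :=
  QF Nb Nb ((s02 + M2%:R * sx2 * qform (H *m H^T) t2)
            / (s02 + M1%:R * sx2 * qform (H *m H^T) t1) * gamma).

(* The detection probability is Q_F(c * gamma), where Q_F is nonincreasing and
   gamma >= 0 (otherwise Q_F(gamma) would be 0 or 1, not P_FA), so it suffices
   to minimise the ratio c of two affine functions of the Rayleigh quotients
   t2^T H H^T t2 and t1^T H H^T t1.  Expanding a unit vector in the eigenbasis
   shows every Rayleigh quotient lies in [rho_N^2, rho_1^2], the two bounds
   being attained at u_N and u_1. *)
From HB Require Import structures.
From mathcomp Require Import all_boot all_order all_algebra.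
From mathcomp Require Import all_classical all_reals all_analysis.
From mathcomp Require Import zify.
Import Order.TTheory GRing.Theory Num.Theory.
Local Open Scope ring_scope.

Section integral_monotone.
Local Open Scope ereal_scope.
Context d (T : measurableType d) (R : realType) (mu : {measure set T -> \bar R}).

(* Unlike [ge0_le_integral], no measurability is required: the integral of a
   nonnegative function is a supremum over the simple functions below it. *)
Lemma ge0_le_integralT (f g : T -> \bar R) :
  (forall x, 0 <= f x) -> (forall x, f x <= g x) ->
  \int[mu]_x f x <= \int[mu]_x g x.
Proof.
move=> f0 fg; have g0 x : 0 <= g x by exact: le_trans (f0 x) (fg x).
rewrite !ge0_integralTE //; apply: ereal_sup_le => _ [h hf <-].
by exists h => //= x; exact: le_trans (hf x) (fg x).
Qed.

End integral_monotone.

Section F_survival.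
Variable R : realType.
Variables d1 d2 : nat.
Local Notation mu := (@lebesgue_measure R).

Lemma F_kernel_ge0 (x : R) : 0 <= F_kernel d1 d2 x.
Proof. by rewrite /F_kernel; case: ifP => // _; apply: mulr_ge0; exact: powR_ge0. Qed.

Lemma F_kernel_le0 (x : R) : x <= 0 -> F_kernel d1 d2 x = 0.
Proof. by rewrite /F_kernel ltNge => ->. Qed.

Definition F_tail (x : R) : \bar R :=
  (\int[mu]_(y in `]x, +oo[) (F_kernel d1 d2 y)%:E)%E.

Lemma QFE x : QF d1 d2 x = fine (F_tail x) / fine (F_tail 0).
Proof. by []. Qed.

Lemma F_tail_ge0 x : (0 <= F_tail x)%E.
Proof. by apply: integral_ge0 => y _; rewrite lee_fin F_kernel_ge0. Qed.

Let in_itv_oo (x z : R) :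
  (z \in @mkset R (fun w => w \in `]x, +oo[)) = (x < z).
Proof. by apply/idP/idP; rewrite in_setE /= in_itv /= andbT. Qed.

Lemma le_F_tail x y : x <= y -> (F_tail y <= F_tail x)%E.
Proof.
move=> xy; rewrite /F_tail [X in (X <= _)%E]integral_mkcond.
rewrite [X in (_ <= X)%E]integral_mkcond.
apply: ge0_le_integralT => z; rewrite /patch !in_itv_oo.
  by case: ifP => // _; rewrite lee_fin F_kernel_ge0.
case: ifP => [yz|_]; first by rewrite (le_lt_trans xy yz).
by case: ifP => // _; rewrite lee_fin F_kernel_ge0.
Qed.

Lemma F_tail_le0 x : x <= 0 -> F_tail x = F_tail 0.
Proof.
move=> x0; rewrite /F_tail [LHS]integral_mkcond [RHS]integral_mkcond.
congr integral; apply/funext => z; rewrite /patch !in_itv_oo.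
have [z0|z0] := ltP 0 z; first by rewrite (le_lt_trans x0 z0).
by case: ifP => // _; rewrite F_kernel_le0.
Qed.

Lemma F_tail_le_tail0 x : (F_tail x <= F_tail 0)%E.
Proof.
have [x0|x0] := leP x 0; first by rewrite F_tail_le0.
exact/le_F_tail/ltW.
Qed.

Lemma QF_nonincreasing : {homo @QF R d1 d2 : x y / x <= y >-> y <= x}.
Proof.
move=> x y xy; rewrite !QFE.
have := F_tail_ge0 0; case tail0E: (F_tail 0) => [c| |] // c_ge0.
  apply: ler_wpM2r; first by rewrite invr_ge0.
  have fin_tail z : F_tail z \is a fin_num.
    rewrite ge0_fin_numE ?F_tail_ge0 //.
    by rewrite (le_lt_trans (F_tail_le_tail0 z)) // tail0E ltry.
  by apply: fine_le; rewrite ?fin_tail ?le_F_tail.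
(* an infinite total mass makes [fine] return 0, and then [QF] vanishes *)
by rewrite /= invr0 !mulr0.
Qed.

Lemma QF_nonpos (x : R) : x <= 0 -> (QF d1 d2 x == 0) || (QF d1 d2 x == 1).
Proof.
move=> x0; rewrite QFE F_tail_le0 //.
have [->|t0] := eqVneq (fine (F_tail 0)) 0; first by rewrite mul0r eqxx.
by rewrite divff // eqxx orbT.
Qed.

Lemma QF_in01_ge0 (x : R) : 0 < QF d1 d2 x < 1 -> 0 <= x.
Proof.
case/andP=> Q0 Q1; rewrite leNgt; apply/negP => /ltW/QF_nonpos.
by case/orP=> /eqP QE; rewrite QE ltxx in Q0 Q1.
Qed.

End F_survival.

Lemma qform_eigenvector {R : realType} {N : nat} {A : 'M[R]_N} {v : 'cV[R]_N}
  {a : R} : v^T *m v = 1%:M -> A *m v = a *: v -> qform A v = a.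
Proof.
move=> vv Av; rewrite /qform -mulmxA Av -scalemxAr vv.
by rewrite !mxE eqxx mulr1n mulr1.
Qed.

Definition eigenbasis_mx {R : Type} {N : nat} (u : 'I_N -> 'cV[R]_N) : 'M[R]_N :=
  \matrix_(k, j) u j k 0.

Section Rayleigh_quotient.
Context {R : realType} {N : nat} {A : 'M[R]_N}.
Context {u : 'I_N -> 'cV[R]_N} {r : 'I_N -> R}.
Hypothesis u_orthonormal : forall i j, (u i)^T *m u j = (i == j)%:R%:M.
Hypothesis u_eigen : forall i, A *m u i = r i *: u i.
Local Notation U := (eigenbasis_mx u).

Let scalar_entry (a : R) : (a%:M : 'M[R]_1) 0 0 = a.
Proof. by rewrite mxE eqxx mulr1n. Qed.

Lemma eigenbasis_mx_orthogonal : U *m U^T = 1%:M.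
Proof.
apply: mulmx1C; apply/matrixP => i j.
rewrite [RHS]mxE -[_ *+ _]scalar_entry -u_orthonormal !mxE.
by apply: eq_bigr => k _; rewrite !mxE.
Qed.

Lemma mul_eigenbasis_mx : A *m U = U *m diag_mx (\row_j r j).
Proof.
apply/matrixP => k j; rewrite mul_mx_diag !mxE mulrC.
have /matrixP/(_ k 0) := u_eigen j; rewrite !mxE => <-.
by apply: eq_bigr => l _; rewrite !mxE.
Qed.

Lemma qform_eigen_coords (t : 'cV[R]_N) :
  qform A t = \sum_i r i * ((U^T *m t) i 0) ^+ 2.
Proof.
have -> : qform A t = qform (diag_mx (\row_j r j)) (U^T *m t).
  rewrite /qform trmx_mul trmxK.
  have -> : t^T *m A *m t = t^T *m A *m (U *m U^T *m t).
    by rewrite eigenbasis_mx_orthogonal mul1mx.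
  by rewrite !mulmxA -(mulmxA _ A) mul_eigenbasis_mx !mulmxA.
rewrite /qform mxE; apply: eq_bigr => i _.
by rewrite mul_mx_diag !mxE mulrAC -expr2 mulrC.
Qed.

Lemma sum_eigen_coords_sqr (t : 'cV[R]_N) :
  t^T *m t = 1%:M -> \sum_i ((U^T *m t) i 0) ^+ 2 = 1.
Proof.
move=> t_unit; have : (U^T *m t)^T *m (U^T *m t) = 1%:M.
  by rewrite trmx_mul trmxK mulmxA -(mulmxA t^T) eigenbasis_mx_orthogonal mulmx1.
move=> /matrixP/(_ 0 0); rewrite scalar_entry mxE => <-.
by apply: eq_bigr => i _; rewrite !mxE expr2.
Qed.

Lemma qform_eigen_bounds {lo hi : R} {t : 'cV[R]_N} :
  (forall i, lo <= r i <= hi) -> t^T *m t = 1%:M -> lo <= qform A t <= hi.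
Proof.
move=> r_bounds t_unit; rewrite qform_eigen_coords.
rewrite -[lo]mulr1 -[hi]mulr1 -(sum_eigen_coords_sqr _ t_unit) !mulr_sumr.
apply/andP; split; apply: ler_sum => i _;
  by apply: ler_wpM2r; [exact: sqr_ge0 | case/andP: (r_bounds i)].
Qed.

End Rayleigh_quotient.

Lemma ler_pdiv_monotone (R : numFieldType) (a a' b b' : R) :
  0 < a -> a <= a' -> 0 < b' -> b' <= b -> a / b <= a' / b'.
Proof.
move=> a0 aa' b'0 bb'; have b0 := lt_le_trans b'0 bb'.
rewrite ler_pdivrMr // mulrAC ler_pdivlMr //.
exact: ler_pM (ltW a0) (ltW b'0) aa' bb'.
Qed.

Theorem corollary2 (R : realType) (N K : nat) (H : 'M[R]_(N, K))
  (u : 'I_N -> 'cV[R]_N) (rho2 : 'I_N -> R) (i1 iN : 'I_N)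
  (M1 M2 Nb : nat) (sx2 s02 PFA gamma : R) :
  (1 <= K)%N -> (K <= N)%N ->
  \rank H = K ->
  (forall i j : 'I_N, (u i)^T *m u j = (i == j)%:R%:M) ->
  (forall i : 'I_N, H *m H^T *m u i = rho2 i *: u i) ->
  (forall i : 'I_N, 0 <= rho2 i) ->
  (forall i j : 'I_N, (i <= j)%N -> rho2 j <= rho2 i) ->
  val i1 = 0%N -> val iN = N.-1 ->
  rho2 iN < rho2 i1 ->
  (0 < M1)%N -> (0 < M2)%N -> (0 < Nb)%N ->
  0 < sx2 -> 0 < s02 ->
  0 < PFA < 1 ->
  QF Nb Nb gamma = PFA ->
  forall t1 t2 : 'cV[R]_N,
    t1^T *m t1 = 1%:M -> t2^T *m t2 = 1%:M -> t1^T *m t2 = 0 ->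
    PD H M1 M2 Nb sx2 s02 gamma t1 t2
      <= PD H M1 M2 Nb sx2 s02 gamma (u i1) (u iN).
Proof.
move=> _ _ _ u_orth u_eigen rho2_ge0 rho2_mono i1E iNE _ M1_gt0 M2_gt0 _ sx2_gt0
  s02_gt0 PFA01 gammaE t1 t2 t1_unit t2_unit _.
have gamma_ge0 : 0 <= gamma by apply: (@QF_in01_ge0 _ Nb Nb); rewrite gammaE.
have unit_u i : (u i)^T *m u i = 1%:M by rewrite u_orth eqxx.
have rho2_bounds i : rho2 iN <= rho2 i <= rho2 i1.
  by rewrite !rho2_mono // ?i1E // iNE; have := ltn_ord i; lia.
have [lo1 hi1] := andP (qform_eigen_bounds u_orth u_eigen rho2_bounds t1_unit).
have [lo2 _] := andP (qform_eigen_bounds u_orth u_eigen rho2_bounds t2_unit).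
have M1sx2_gt0 : 0 < M1%:R * sx2 :> R by rewrite mulr_gt0 ?ltr0n.
have M2sx2_gt0 : 0 < M2%:R * sx2 :> R by rewrite mulr_gt0 ?ltr0n.
rewrite /PD !(qform_eigenvector (unit_u _) (u_eigen _)).
apply/QF_nonincreasing/ler_wpM2r => //; apply: ler_pdiv_monotone.
- exact: ltr_wpDr (mulr_ge0 (ltW M2sx2_gt0) (rho2_ge0 iN)) s02_gt0.
- by rewrite lerD2l ler_pM2l.
- exact: ltr_wpDr (mulr_ge0 (ltW M1sx2_gt0) (le_trans (rho2_ge0 iN) lo1)) s02_gt0.
- by rewrite lerD2l ler_pM2l.
Qed.
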